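(* Consider a block-fading channel with channel power gain $h(\nu)\ge0$ (a random variable with continuous pdf) at fading state $\nu$, noise power $\sigma^2>0$, and power limits $0<P_{\rm avg}\le P_{\rm peak}$; let $\mathcal P=\{p(\nu): E_\nu[p(\nu)]\le P_{\rm avg},\ 0\le p(\nu)\le P_{\rm peak}\ \forall\nu\}$. For a feasible target $\bar Q\ge0$, consider the problem: maximize over $p(\nu)$ the quantity $E_\nu\big[\log\big(1+\frac{h(\nu)p(\nu)}{\sigma^2}\big)\big]$ subject to $E_\nu[h(\nu)p(\nu)]\ge\bar Q$ and $p\in\mathcal P$. Let $\lambda^\ast\ge0$ and $\beta^\ast\ge0$ be the optimal dual solutions associated with the harvested energy constraint and the average power constraint, respectively. Then the optimal power allocation is $p(\nu)=P_{\rm peak}$ if $h(\nu)\ge\frac{\beta^\ast}{\lambda^\ast}$, and $p(\nu)=\Big[\frac{1}{\beta^\ast-\lambda^\ast h(\nu)}-\frac{\sigma^2}{h(\nu)}\Big]_0^{P_{\rm peak}}$ otherwise, where $[x]_a^b=\max(\min(x,b),a)$.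
   Context: $\log$ is the natural logarithm. This problem models an ideal receiver that decodes information and harvests energy from the same received signal without loss. The dual variables are those of the Lagrangian $E_\nu[\log(1+h p/\sigma^2)]+\lambda(E_\nu[hp]-\bar Q)-\beta(E_\nu[p]-P_{\rm avg})$. *)

From HB Require Import structures.
From mathcomp Require Import all_boot all_order all_algebra.
From mathcomp Require Import all_classical all_reals all_analysis.
Set Implicit Arguments. Unset Strict Implicit. Unset Printing Implicit Defensive.
Import Order.TTheory GRing.Theory Num.Theory.
Import numFieldNormedType.Exports.
Local Open Scope classical_set_scope.
Local Open Scope ring_scope.

Section SWIPT.
Context {R : realType} {d : measure_display} {T : measurableType d}.

Definition clip (a b x : R) : R := Num.max (Num.min x b) a.

Definition peak_admissible (Ppeak : R) (p : T -> R) : Prop :=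
  measurable_fun setT p /\ (forall nu, 0 <= p nu <= Ppeak).

Definition Ex (P : probability T R) (f : T -> R) : \bar R :=
  (\int[P]_nu (f nu)%:E)%E.

Definition rate (P : probability T R) (h : T -> R) (sigma2 : R) (p : T -> R)
  : \bar R := Ex P (fun nu => ln (1 + h nu * p nu / sigma2)).

Definition feasible (P : probability T R) (h : T -> R) (Pavg Ppeak Qbar : R)
  (p : T -> R) : Prop :=
  peak_admissible Ppeak p /\ (Ex P p <= Pavg%:E)%E
  /\ (Qbar%:E <= Ex P (fun nu => (h nu * p nu)%R))%E.

Definition primal_optimal (P : probability T R) (h : T -> R)
  (sigma2 Pavg Ppeak Qbar : R) (p : T -> R) : Prop :=
  feasible P h Pavg Ppeak Qbar p /\
  forall q, feasible P h Pavg Ppeak Qbar q ->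
    (rate P h sigma2 q <= rate P h sigma2 p)%E.

Definition lagrangian (P : probability T R) (h : T -> R)
  (sigma2 Pavg Qbar lam beta : R) (p : T -> R) : \bar R :=
  (rate P h sigma2 p
   + lam%:E * (Ex P (fun nu => (h nu * p nu)%R) - Qbar%:E)
   - beta%:E * (Ex P p - Pavg%:E))%E.

Definition dual_fun (P : probability T R) (h : T -> R)
  (sigma2 Pavg Ppeak Qbar lam beta : R) : \bar R :=
  ereal_sup [set lagrangian P h sigma2 Pavg Qbar lam beta p
            | p in peak_admissible Ppeak].

Definition dual_optimal (P : probability T R) (h : T -> R)
  (sigma2 Pavg Ppeak Qbar lam beta : R) : Prop :=
  0 <= lam /\ 0 <= beta /\
  forall lam' beta', 0 <= lam' -> 0 <= beta' ->
    (dual_fun P h sigma2 Pavg Ppeak Qbar lam beta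
     <= dual_fun P h sigma2 Pavg Ppeak Qbar lam' beta')%E.

(* the claimed allocation; "h >= beta/lam" is written lam*h >= beta so that
   lam = 0 is read as beta/lam = +oo (when beta > 0) *)
Definition opt_alloc (h : T -> R) (sigma2 Ppeak lam beta : R) (nu : T) : R :=
  if beta <= lam * h nu then Ppeak
  else clip 0 Ppeak ((beta - lam * h nu)^-1 - sigma2 / h nu).

Definition has_continuous_pdf (P : probability T R) (h : T -> R) : Prop :=
  exists f : R -> R,
    (forall x, 0 <= f x) /\ measurable_fun setT f /\
    {within `[0, +oo[%classic, continuous f} /\
    forall A, measurable A ->
      P (h @^-1` A) = (\int[lebesgue_measure]_(x in A) (f x)%:E)%E.

End SWIPT.

From HB Require Import structures.
From mathcomp Require Import all_boot all_order all_algebra.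
From mathcomp Require Import all_classical all_reals all_analysis.
From mathcomp Require Import ring lra measurable_realfun.
Import Order.TTheory GRing.Theory Num.Theory.
Import numFieldNormedType.Exports.
Local Open Scope classical_set_scope.
Local Open Scope ring_scope.

(* For a fixed gain [H > 0] the pointwise Lagrangian
   [g x = ln (1 + H x / s) + l H x - b x] is strongly concave on [[0, Pk]], with
   curvature at least [H^2 / (4 (s + H Pk)^2)], and is maximised by the clipped
   water-filling level of the statement.  Integrating, the Lagrangian of any
   allocation at any dual point [(l', b')] exceeds its value at [popt] by at most
   an integral that is [o(|(l', b') - (l, b)|)].  Hence the dual function at the
   optimal [(l, b)] is the Lagrangian at [popt], and minimality of the dual in
   every feasible direction gives feasibility of [popt] and complementary
   slackness.  Weak duality then makes [popt] optimal, and for any other optimum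
   [p] the curvature term forces [\int curv (p - popt)^2 = 0]; as [h] has a
   density, [h <> 0] almost surely, so [p = popt] almost everywhere. *)

Section PointwiseLagrangian.
Context {R : realType}.
Implicit Types H s Pk l b x : R.

Lemma lnB_le_quad (X Y M : R) : 0 < X -> 0 < Y -> X <= M -> Y <= M ->
  ln X - ln Y <= (X - Y) / Y - (X - Y) ^+ 2 / (4 * M ^+ 2).
Proof.
move=> X0 Y0 XM YM.
(* With [a = sqrt X], [b = sqrt Y]: [ln X - ln Y = 2 ln (a/b) <= 2 (a/b - 1)],
   and [2 (a/b - 1)] is the right-hand side plus a square, since [b (a + b) <= 2 M]. *)
set a := Num.sqrt X; set b := Num.sqrt Y.
have a0 : 0 < a by rewrite sqrtr_gt0.
have b0 : 0 < b by rewrite sqrtr_gt0.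
have Xa : X = a ^+ 2 by rewrite sqr_sqrtr // ltW.
have Yb : Y = b ^+ 2 by rewrite sqr_sqrtr // ltW.
have ab0 : 0 < a / b by rewrite divr_gt0.
have lnE : ln X - ln Y = 2 * ln (a / b).
  rewrite -lnV ?posrE // -lnM ?posrE ?invr_gt0 // Xa Yb -exprVn -exprMn.
  by rewrite lnXn // mulr2n mulr_natl mulr2n.
have ln_le : ln (a / b) <= a / b - 1.
  by rewrite -[X in ln X](subrK 1) addrC le_ln1Dx //; lra.
suff : 2 * (a / b - 1) <= (X - Y) / Y - (X - Y) ^+ 2 / (4 * M ^+ 2) by lra.
rewrite Xa Yb in XM YM *.
have ab_le : (b * (a + b)) ^+ 2 <= 4 * M ^+ 2.
  have : 0 <= b * (a + b) <= 2 * M by apply/andP; split; nra.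
  by move=> /andP[? ?]; rewrite expr2; nra.
have -> : 2 * (a / b - 1) = (a ^+ 2 - b ^+ 2) / b ^+ 2 - (a - b) ^+ 2 / b ^+ 2.
  by field; rewrite gt_eqF.
rewrite lerD2l lerN2.
have -> : (a ^+ 2 - b ^+ 2) ^+ 2 / (4 * M ^+ 2)
    = (a - b) ^+ 2 * ((a + b) ^+ 2 / (4 * M ^+ 2)) by rewrite mulrA; congr (_ / _); ring.
rewrite ler_wpM2l ?sqr_ge0 // -subr_ge0.
have M0 : 0 < M by lra.
have -> : (b ^+ 2)^-1 - (a + b) ^+ 2 / (4 * M ^+ 2)
    = (4 * M ^+ 2 - (b * (a + b)) ^+ 2) / (4 * M ^+ 2 * b ^+ 2).
  by field; rewrite ?gt_eqF //; nra.
by rewrite divr_ge0 ?subr_ge0 // mulr_ge0 ?sqr_ge0 // mulr_ge0 ?sqr_ge0.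
Qed.

Lemma clip0_itv Pk z : 0 <= Pk -> 0 <= clip 0 Pk z <= Pk.
Proof.
move=> Pk0; rewrite /clip le_max lexx orbT /=.
by rewrite ge_max Pk0 andbT ge_min lexx orbT.
Qed.

(* [opt_alloc h s Pk l b nu] is convertible to [opt_level (h nu) s Pk l b]. *)
Definition opt_level H s Pk l b :=
  if b <= l * H then Pk else clip 0 Pk ((b - l * H)^-1 - s / H).

Definition lag_pt H s l b x := ln (1 + H * x / s) + l * (H * x) - b * x.

Definition curvature H s Pk := H ^+ 2 / (4 * (s + H * Pk) ^+ 2).

Lemma opt_level_itv H s Pk l b : 0 <= Pk -> 0 <= opt_level H s Pk l b <= Pk.
Proof.
move=> Pk0; rewrite /opt_level; case: ifP => _; last exact: clip0_itv.
by rewrite Pk0 lexx.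
Qed.

(* [H / (s + H y) + l H - b] is the derivative of [lag_pt H s l b] at
   [y := opt_level H s Pk l b]: it vanishes when the clip is inactive and has
   the sign pushing towards the endpoint otherwise. *)
Lemma opt_level_variational H s Pk l b x : 0 < H -> 0 < s -> 0 <= Pk ->
  0 <= l -> 0 <= b -> 0 <= x <= Pk ->
  (H / (s + H * opt_level H s Pk l b) + l * H - b) * (x - opt_level H s Pk l b)
  <= 0.
Proof.
move=> H0 s0 Pk0 l0 b0 /andP[x0 xP]; rewrite /opt_level.
case: ifP => [bl|/negbT]; rewrite -?ltNge.
  have : 0 < H / (s + H * Pk) by rewrite divr_gt0 //; nra.
  by move=> q; rewrite mulr_ge0_le0 //; lra.
move=> lb; set D := b - l * H; have D0 : 0 < D by rewrite /D; lra.
set z := D^-1 - s / H.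
have zE : z * (D * H) = H - s * D by rewrite /z; field; rewrite !gt_eqF.
have DH : 0 < D * H by rewrite mulr_gt0.
rewrite /clip; have [zP|zP] := lerP Pk z.
  rewrite (max_l Pk0).
  have : D <= H / (s + H * Pk).
    have := ler_wpM2r (ltW DH) zP; rewrite zE => h1.
    by rewrite ler_pdivlMr; nra.
  have -> : H / (s + H * Pk) + l * H - b = H / (s + H * Pk) - D by rewrite /D; ring.
  by move=> h1; apply: mulr_ge0_le0; lra.
have [z0|z0] := lerP z 0.
  rewrite mulr0 addr0.
  have : H / s <= D.
    have := ler_wpM2r (ltW DH) z0; rewrite zE mul0r => h1.
    by rewrite ler_pdivrMr //; nra.
  have -> : H / s + l * H - b = H / s - D by rewrite /D; ring.
  by move=> h1; apply: mulr_le0_ge0; lra.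
have -> : s + H * z = H / D by rewrite /z; field; rewrite !gt_eqF.
have -> : H / (H / D) + l * H - b = 0.
  by rewrite /D; field; rewrite !gt_eqF.
by rewrite mul0r.
Qed.

Lemma lag_pt_le_opt_level H s Pk l b x : 0 < H -> 0 < s -> 0 <= Pk ->
  0 <= l -> 0 <= b -> 0 <= x <= Pk ->
  lag_pt H s l b x <= lag_pt H s l b (opt_level H s Pk l b)
                      - curvature H s Pk * (x - opt_level H s Pk l b) ^+ 2.
Proof.
move=> H0 s0 Pk0 l0 b0 xP.
have fo := @opt_level_variational H s Pk l b x H0 s0 Pk0 l0 b0 xP.
have /andP[y0 yP] := opt_level_itv H s Pk l b Pk0.
set y := opt_level H s Pk l b in fo y0 yP *.
case/andP: xP => x0 xP.
have lnE z : 0 <= z -> ln (1 + H * z / s) = ln (s + H * z) - ln s.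
  move=> z0; have -> : 1 + H * z / s = (s + H * z) * s^-1 by field; rewrite gt_eqF.
  by rewrite lnM ?posrE ?invr_gt0 ?lnV ?posrE //; nra.
have sHy : 0 < s + H * y by nra.
have := @lnB_le_quad (s + H * x) (s + H * y) (s + H * Pk).
have e1 : (s + H * x - (s + H * y)) / (s + H * y) = H / (s + H * y) * (x - y).
  by field; rewrite gt_eqF.
have e2 : (s + H * x - (s + H * y)) ^+ 2 = H ^+ 2 * (x - y) ^+ 2 by ring.
rewrite e1 e2 => /(_ ltac:(nra) sHy ltac:(nra) ltac:(nra)) hq.
rewrite /lag_pt !lnE // /curvature mulrAC.
set A := H / (s + H * y) in fo hq; lra.
Qed.

Lemma concave_quad_le_min (c w e Pk : R) : 0 < c -> `|e| <= Pk ->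
  - c * e ^+ 2 + w * e <= Num.min (`|w| * Pk) (w ^+ 2 / (4 * c)).
Proof.
move=> c0 eP; rewrite le_min; apply/andP; split.
  have : w * e <= `|w| * Pk by rewrite (le_trans (ler_norm _)) // normrM ler_wpM2l.
  have : 0 <= c * e ^+ 2 by rewrite mulr_ge0 ?sqr_ge0 // ltW.
  lra.
have -> : w ^+ 2 / (4 * c) = - c * e ^+ 2 + w * e + (w - 2 * c * e) ^+ 2 / (4 * c).
  by field; rewrite gt_eqF.
by rewrite lerDl divr_ge0 ?sqr_ge0 //; lra.
Qed.

End PointwiseLagrangian.

Lemma measurable_inv {R : realType} : measurable_fun setT (@GRing.inv R).
Proof.
rewrite -(setUv [set 0]); apply/measurable_funU => //; first exact: measurableC.
split; first exact: measurable_fun_set1.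
apply: open_continuous_measurable_fun.
  exact/closed_openC/accessible_closed_set1/hausdorff_accessible/Rhausdorff.
by move=> x /set_mem /eqP x0; exact: inv_continuous.
Qed.

Section Integrals.
Context {R : realType} {d : measure_display} {T : measurableType d}.
Variable P : probability T R.

Lemma Ex_Rintegral {f : T -> R} : P.-integrable setT (EFin \o f) ->
  Ex P f = (\int[P]_x f x)%:E.
Proof. by move=> fi; rewrite /Ex /Rintegral fineK //; exact: integrable_fin_num. Qed.

Lemma integrable_le_affine (g f : T -> R) a c :
  P.-integrable setT (EFin \o g) -> measurable_fun setT f -> 0 <= a ->
  (forall x, `|f x| <= a * g x + c) -> P.-integrable setT (EFin \o f).
Proof.
move=> gi mf a0 fb.
have ig : P.-integrable setT (EFin \o (fun x => a * g x + c)).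
  have := integrableD measurableT (integrableZl measurableT a gi)
    (finite_measure_integrable_cst P c measurableT).
  by apply: eq_integrable => // x _ /=; rewrite EFinD EFinM.
apply: le_integrable ig => //; first exact/measurable_EFinP.
by move=> x _ /=; rewrite lee_fin (le_trans (fb x)) // ler_norm.
Qed.

Lemma integrable_EFinB (f g : T -> R) : P.-integrable setT (EFin \o f) ->
  P.-integrable setT (EFin \o g) -> P.-integrable setT (EFin \o (fun x => f x - g x)).
Proof. by move=> fi gi; apply: eq_integrable (integrableB measurableT fi gi). Qed.

Lemma Rintegral_eq0_ae (f : T -> R) : P.-integrable setT (EFin \o f) ->
  (forall x, 0 <= f x) -> \int[P]_x f x = 0 -> {ae P, forall x, f x = 0}.
Proof.
move=> fi f0 If0; have mf : measurable_fun setT (EFin \o f) by case/integrableP: fi.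
have : (\int[P]_(x in setT) `|(EFin \o f) x| = 0)%E.
  rewrite (eq_integral (EFin \o f)); last by move=> x _; rewrite /= ger0_norm.
  rewrite -[LHS]fineK; first by rewrite -/(Rintegral _ _ _) If0.
  exact: integrable_fin_num.
move=> /(ae_eq_integral_abs P measurableT mf).
by apply: filterS => x /(_ I) /= /eqP; rewrite eqe => /eqP.
Qed.

(* The integrals vanish as [t -> 0] by dominated convergence (dominated by [a]). *)
Lemma ge0_min_integral_vanish {X del : R} {a K : T -> R} : 0 < del ->
  measurable_fun setT a -> measurable_fun setT K ->
  (forall x, 0 <= a x) -> (forall x, 0 <= K x) ->
  P.-integrable setT (EFin \o a) ->
  (forall t, 0 < t <= del -> 0 <= X + \int[P]_x Num.min (a x) (t * K x)) ->
  0 <= X.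
Proof.
move=> del0 ma mK a0 K0 ia HX; rewrite leNgt; apply/negP => X0.
pose k n x := Num.min (a x) ((del * harmonic n) * K x).
have k0 n x : 0 <= k n x by rewrite /k le_min a0 /= !mulr_ge0 // ltW.
have mk n : measurable_fun setT (EFin \o k n).
  apply/measurable_EFinP/measurable_minr => //.
  by apply: measurable_funM => //; exact: measurable_cst.
have cvk x : (fun n => (k n x)%:E) @ \oo --> 0%:E.
  apply: cvg_EFin; first exact: nearW.
  have : (fun n => del * harmonic n * K x) @ \oo --> del * 0 * K x.
    apply: cvgM; last exact: cvg_cst.
    by apply: cvgM; [exact: cvg_cst | exact: cvg_harmonic].
  rewrite mulr0 mul0r; apply: squeeze_cvgr (cvg_cst 0); apply: nearW => n /=.
  by rewrite k0 /= /k ge_min lexx orbT.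
have kle : {ae P, forall x n, setT x -> (`|(EFin \o k n) x| <= (EFin \o a) x)%E}.
  by apply: aeW => x n _ /=; rewrite lee_fin ger0_norm // /k ge_min lexx.
have [_ _ cv] := dominated_convergence measurableT mk (measurable_cst _)
  (aeW _ (fun x _ => cvk x)) ia kle.
rewrite integral0 in cv.
have [N _ HN] := cvgr_lt 0 (fine_cvg cv) (-X) ltac:(by rewrite oppr_gt0).
have := HN N (leqnn N); rewrite /= /k => HNN.
have t0 : 0 < del * harmonic N by rewrite mulr_gt0 // harmonic_gt0.
have tle : del * harmonic N <= del by rewrite ger_pMr // invf_le1 // ler1n.
have := HX (del * harmonic N) ltac:(by rewrite t0 tle).
rewrite /Rintegral; lra.
Qed.

End Integrals.

Lemma pdf_preimage_set1 {R : realType} {d : measure_display} {T : measurableType d}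
  {P : probability T R} {h : T -> R} (r : R) :
  has_continuous_pdf P h -> P (h @^-1` [set r]) = 0%E.
Proof.
case=> f [f0 [mf [_ hf]]]; rewrite hf; last exact: measurable_set1.
apply: null_set_integral; [exact: measurable_set1| |exact: lebesgue_measure_set1].
by apply/measurable_EFinP; exact: measurable_funS mf.
Qed.

Section NonzeroGain.
Context {R : realType} {d : measure_display} {T : measurableType d}.
Variables (P : probability T R) (h : T -> R).
Hypothesis mh : measurable_fun setT h.
Hypothesis h0null : P (h @^-1` [set 0]) = 0%E.

Let mN0 : measurable (h @^-1` [set 0]).
Proof. by rewrite -[X in measurable X]setTI; apply: mh => //; exact: measurable_set1. Qed.

Lemma ae_neq0 : {ae P, forall x, h x != 0}.
Proof.
exists (h @^-1` [set 0]); split; [exact: mN0 | exact: h0null |].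
by move=> x /= /negP; rewrite negbK => /eqP.
Qed.

Lemma le_Rintegral_neq0 (f g : T -> R) : P.-integrable setT (EFin \o f) ->
  P.-integrable setT (EFin \o g) -> (forall x, h x != 0 -> f x <= g x) ->
  \int[P]_x f x <= \int[P]_x g x.
Proof.
move=> fi gi fg; have mS : measurable (setT `\` h @^-1` [set 0]).
  exact: measurableD.
rewrite /Rintegral (negligible_integral mN0 measurableT fi h0null).
rewrite (negligible_integral mN0 measurableT gi h0null).
apply: le_Rintegral => //; [exact: integrableS fi|exact: integrableS gi|].
by move=> x [_ /eqP hx]; apply: fg.
Qed.

End NonzeroGain.

Section OptimalAllocation.
Context {R : realType} {d : measure_display} {T : measurableType d}.
Variables (P : probability T R) (h : T -> R).
Hypothesis mh : measurable_fun setT h.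
Hypothesis h0 : forall x, 0 <= h x.
Hypothesis ih : P.-integrable setT (fun x => (h x)%:E).
Hypothesis h0null : P (h @^-1` [set 0]) = 0%E.
Variables (s Pa Pk Q l b : R).
Hypotheses (s0 : 0 < s) (Pk0 : 0 <= Pk) (l0 : 0 <= l) (b0 : 0 <= b).

Local Notation popt := (opt_alloc h s Pk l b).

Lemma gain_gt0 x : h x != 0 -> 0 < h x.
Proof. by move=> hx; rewrite lt_neqAle eq_sym hx h0. Qed.

Lemma opt_alloc_itv x : 0 <= popt x <= Pk.
Proof. exact: opt_level_itv. Qed.

Lemma measurable_opt_alloc : measurable_fun setT popt.
Proof.
have mlh : measurable_fun setT (fun x => l * h x).
  by apply: measurable_funM => //; exact: measurable_cst.
apply: measurable_fun_ifT; [|exact: measurable_cst|].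
  by apply: measurable_fun_ler => //; exact: measurable_cst.
apply: measurable_maxr; last exact: measurable_cst.
apply: measurable_minr; last exact: measurable_cst.
apply: measurable_funB.
  apply: measurableT_comp; first exact: measurable_inv.
  by apply: measurable_funB => //; exact: measurable_cst.
apply: measurable_funM; first exact: measurable_cst.
by apply: measurableT_comp => //; exact: measurable_inv.
Qed.

Lemma opt_alloc_admissible : peak_admissible Pk popt.
Proof. by split; [exact: measurable_opt_alloc | exact: opt_alloc_itv]. Qed.

Definition rate_pt (q : T -> R) x := ln (1 + h x * q x / s).

Lemma rate_pt_itv q x : 0 <= q x -> 0 <= rate_pt q x <= h x * q x / s.
Proof.
move=> q0; have hq0 : 0 <= h x * q x / s by rewrite divr_ge0 ?mulr_ge0 // ltW.
by rewrite /rate_pt ln_ge0 ?lerDl //= le_ln1Dx //; lra.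
Qed.

Lemma measurable_rate_pt q : measurable_fun setT q -> measurable_fun setT (rate_pt q).
Proof.
move=> mq; apply: measurableT_comp; first exact: measurable_ln.
apply: measurable_funD; first exact: measurable_cst.
by apply: measurable_funM; [exact: measurable_funM | exact: measurable_cst].
Qed.

Lemma integrable_lin_comb (al be ga : R) {q f : T -> R} :
  peak_admissible Pk q ->
  (forall x, f x = al * rate_pt q x + be * (h x * q x) + ga * q x) ->
  P.-integrable setT (EFin \o f).
Proof.
case=> mq qP fE.
apply: (@integrable_le_affine _ _ _ P h f (`|al| * (Pk / s) + `|be| * Pk) (`|ga| * Pk) ih).
- rewrite (funext fE); apply: measurable_funD; first apply: measurable_funD.
  + by apply: measurable_funM; [exact: measurable_cst | exact: measurable_rate_pt].
  + by apply: measurable_funM; [exact: measurable_cst | exact: measurable_funM].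
  + by apply: measurable_funM; [exact: measurable_cst | exact: mq].
- by rewrite addr_ge0 // mulr_ge0 // divr_ge0 // ltW.
move=> x; have /andP[q0 qPk] := qP x; have /andP[r0 r1] := rate_pt_itv _ _ q0.
have hx := h0 x; have si : 0 <= s^-1 by rewrite invr_ge0 ltW.
have e1 : `|al * rate_pt q x| <= `|al| * (Pk / s * h x).
  rewrite normrM ler_wpM2l // ger0_norm // (le_trans r1) //.
  have : h x * q x <= Pk * h x by nra.
  nra.
have e2 : `|be * (h x * q x)| <= `|be| * (Pk * h x).
  by rewrite normrM ler_wpM2l // ger0_norm ?mulr_ge0 // mulrC ler_wpM2r.
have e3 : `|ga * q x| <= `|ga| * Pk by rewrite normrM ler_wpM2l // ger0_norm.
rewrite fE; apply: (le_trans (ler_normD _ _)).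
have := ler_normD (al * rate_pt q x) (be * (h x * q x)).
have -> : (`|al| * (Pk / s) + `|be| * Pk) * h x + `|ga| * Pk =
  `|al| * (Pk / s * h x) + `|be| * (Pk * h x) + `|ga| * Pk by ring.
lra.
Qed.

Lemma integrable_rate_pt {q : T -> R} : peak_admissible Pk q ->
  P.-integrable setT (EFin \o rate_pt q).
Proof. by move=> qa; apply: (integrable_lin_comb 1 0 0 qa) => x; ring. Qed.

Lemma integrable_hmul {q : T -> R} : peak_admissible Pk q ->
  P.-integrable setT (EFin \o (fun x => h x * q x)).
Proof. by move=> qa; apply: (integrable_lin_comb 0 1 0 qa) => x; ring. Qed.

Lemma integrable_alloc {q : T -> R} : peak_admissible Pk q ->
  P.-integrable setT (EFin \o q).
Proof. by move=> qa; apply: (integrable_lin_comb 0 0 1 qa) => x; ring. Qed.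

Definition lag_fun l' b' (q : T -> R) x := rate_pt q x + l' * (h x * q x) - b' * q x.

Definition lag_val l' b' q := \int[P]_x rate_pt q x
  + l' * (\int[P]_x (h x * q x) - Q) - b' * (\int[P]_x q x - Pa).

Lemma integrable_lag_fun l' b' {q : T -> R} : peak_admissible Pk q ->
  P.-integrable setT (EFin \o lag_fun l' b' q).
Proof.
by move=> qa; apply: (integrable_lin_comb 1 l' (- b') qa) => x; rewrite /lag_fun; ring.
Qed.

Lemma Rintegral_lag_fun l' b' q : peak_admissible Pk q ->
  \int[P]_x lag_fun l' b' q x
  = \int[P]_x rate_pt q x + l' * \int[P]_x (h x * q x) - b' * \int[P]_x q x.
Proof.
move=> qa; rewrite /lag_fun RintegralB //; last first.
- by apply: (integrable_lin_comb 0 0 b' qa) => x; ring.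
- by apply: (integrable_lin_comb 1 l' 0 qa) => x; ring.
rewrite RintegralD //; last by apply: (integrable_lin_comb 0 l' 0 qa) => x; ring.
- by rewrite !RintegralZl // ?integrable_hmul ?integrable_alloc.
- exact: integrable_rate_pt.
Qed.

Lemma lagrangianE l' b' q : peak_admissible Pk q ->
  lagrangian P h s Pa Q l' b' q = (lag_val l' b' q)%:E.
Proof.
move=> qa; rewrite /lagrangian /rate (Ex_Rintegral P (integrable_rate_pt qa)).
rewrite (Ex_Rintegral P (integrable_hmul qa)) (Ex_Rintegral P (integrable_alloc qa)).
by rewrite -!EFinB.
Qed.

Lemma lag_valB l' b' q : peak_admissible Pk q ->
  lag_val l' b' q - lag_val l' b' popt
  = \int[P]_x (lag_fun l' b' q x - lag_fun l' b' popt x).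
Proof.
move=> qa; have pa := opt_alloc_admissible.
rewrite RintegralB ?integrable_lag_fun // !Rintegral_lag_fun // /lag_val; ring.
Qed.

Definition curv x := curvature (h x) s Pk.

Definition gap_lin u v x := `|u * h x - v| * Pk.
Definition gap_quad u v x := (u * h x - v) ^+ 2 / (4 * curv x).

(* For [t = 1] this is the bound of [concave_quad_le_min] on the gain of the
   Lagrangian integrand when the dual variables move by [(u, v)]; the extra
   factor [t] is a dual step size. *)
Definition gap_bound t u v x := Num.min (gap_lin u v x) (t * gap_quad u v x).

Lemma curv_ge0 x : 0 <= curv x.
Proof. by rewrite /curv /curvature divr_ge0 ?sqr_ge0 // mulr_ge0 ?sqr_ge0. Qed.

Lemma curv_gt0 x : 0 < h x -> 0 < curv x.
Proof.
move=> hx; rewrite /curv /curvature divr_gt0 ?exprn_gt0 // mulr_gt0 // exprn_gt0 //.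
by rewrite ltr_wpDr // mulr_ge0.
Qed.

Lemma measurable_curv : measurable_fun setT curv.
Proof.
apply: measurable_funM; first exact: measurable_funX.
apply: measurableT_comp; first exact: measurable_inv.
apply: measurable_funM; first exact: measurable_cst.
apply/measurable_funX/measurable_funD; first exact: measurable_cst.
by apply: measurable_funM => //; exact: measurable_cst.
Qed.

Lemma curv_sqr_le q x : 0 <= q x <= Pk -> curv x * (q x - popt x) ^+ 2 <= 4^-1.
Proof.
move=> /andP[q0 qP]; have /andP[p0 pP] := opt_alloc_itv x.
have hx := h0 x; have hP : 0 <= h x * Pk by rewrite mulr_ge0.
have d2 : (q x - popt x) ^+ 2 <= Pk ^+ 2.
  have h1 : 0 <= Pk - (q x - popt x) by lra.
  have h2 : 0 <= Pk + (q x - popt x) by lra.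
  by have := mulr_ge0 h1 h2; rewrite !expr2; lra.
have e : (h x * Pk) ^+ 2 <= (s + h x * Pk) ^+ 2.
  by have := mulr_ge0 (ltW s0) (addr_ge0 (addr_ge0 (ltW s0) hP) hP); rewrite !expr2; lra.
apply: (le_trans (ler_wpM2l (curv_ge0 x) d2)).
rewrite /curv /curvature mulrAC -exprMn ler_pdivrMr; last first.
  by rewrite mulr_gt0 // exprn_gt0 // ltr_wpDr.
by rewrite mulrA mulVf // mul1r.
Qed.

Lemma curv_sqr_ge0 q x : 0 <= curv x * (q x - popt x) ^+ 2.
Proof. by rewrite mulr_ge0 ?curv_ge0 ?sqr_ge0. Qed.

Lemma integrable_curv_sqr {q : T -> R} : peak_admissible Pk q ->
  P.-integrable setT (EFin \o (fun x => curv x * (q x - popt x) ^+ 2)).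
Proof.
case=> mq qP; apply: (@integrable_le_affine _ _ _ P h _ 0 4^-1 ih) => //.
  apply: measurable_funM; first exact: measurable_curv.
  by apply/measurable_funX/measurable_funB => //; exact: measurable_opt_alloc.
by move=> x; rewrite mul0r add0r ger0_norm ?curv_sqr_le ?curv_sqr_ge0.
Qed.

Lemma gap_lin_ge0 u v x : 0 <= gap_lin u v x.
Proof. by rewrite /gap_lin mulr_ge0. Qed.

Lemma gap_quad_ge0 u v x : 0 <= gap_quad u v x.
Proof. by rewrite /gap_quad divr_ge0 ?sqr_ge0 // mulr_ge0 ?curv_ge0. Qed.

Lemma gap_lin_le u v x : gap_lin u v x <= `|u| * Pk * h x + `|v| * Pk.
Proof.
have := ler_normB (u * h x) v; rewrite normrM (ger0_norm (h0 x)) => e.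
by have := ler_wpM2r Pk0 e; rewrite /gap_lin; lra.
Qed.

Lemma measurable_gap_lin u v : measurable_fun setT (gap_lin u v).
Proof.
apply: measurable_funM; last exact: measurable_cst.
apply: measurableT_comp; first exact: normr_measurable.
apply: measurable_funB; last exact: measurable_cst.
by apply: measurable_funM => //; exact: measurable_cst.
Qed.

Lemma measurable_gap_quad u v : measurable_fun setT (gap_quad u v).
Proof.
apply: measurable_funM.
  apply/measurable_funX/measurable_funB; last exact: measurable_cst.
  by apply: measurable_funM => //; exact: measurable_cst.
apply: measurableT_comp; first exact: measurable_inv.
by apply: measurable_funM; [exact: measurable_cst | exact: measurable_curv].
Qed.

Lemma integrable_gap_lin u v : P.-integrable setT (EFin \o gap_lin u v).
Proof.
apply: (@integrable_le_affine _ _ _ P h _ (`|u| * Pk) (`|v| * Pk) ih).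
- exact: measurable_gap_lin.
- by rewrite mulr_ge0.
by move=> x; rewrite ger0_norm ?gap_lin_ge0 ?gap_lin_le.
Qed.

Lemma gap_bound_ge0 t u v x : 0 <= t -> 0 <= gap_bound t u v x.
Proof. by move=> t0; rewrite le_min gap_lin_ge0 mulr_ge0 ?gap_quad_ge0. Qed.

Lemma integrable_gap_bound t u v : 0 <= t ->
  P.-integrable setT (EFin \o gap_bound t u v).
Proof.
move=> t0; apply: (@integrable_le_affine _ _ _ P h _ (`|u| * Pk) (`|v| * Pk) ih).
- apply: measurable_minr; first exact: measurable_gap_lin.
  by apply: measurable_funM; [exact: measurable_cst | exact: measurable_gap_quad].
- by rewrite mulr_ge0.
move=> x; rewrite ger0_norm ?gap_bound_ge0 //.
by apply: le_trans (gap_lin_le u v x); rewrite ge_min lexx.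
Qed.

Lemma gap_bound00 x : gap_bound 1 0 0 x = 0.
Proof.
rewrite /gap_bound /gap_lin /gap_quad !mul0r subrr normr0 mul0r.
by rewrite expr0n /= mul0r mulr0 minxx.
Qed.

Lemma gap_bound_scale t u v x : 0 < t ->
  gap_bound 1 (t * u) (t * v) x = t * gap_bound t u v x.
Proof.
move=> t0; rewrite /gap_bound /gap_lin /gap_quad minr_pMr; last exact: ltW.
have -> : t * u * h x - t * v = t * (u * h x - v) by ring.
by rewrite normrM (ger0_norm (ltW t0)) exprMn; congr (Num.min _ _); ring.
Qed.

Lemma lag_funB_le l' b' q x : 0 < h x -> 0 <= q x <= Pk ->
  lag_fun l' b' q x - lag_fun l' b' popt x
  <= - curv x * (q x - popt x) ^+ 2 + ((l' - l) * h x - (b' - b)) * (q x - popt x).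
Proof.
move=> hx qx; have := @lag_pt_le_opt_level _ (h x) s Pk l b (q x) hx s0 Pk0 l0 b0 qx.
rewrite /lag_pt -/(curv x) -/(rate_pt q x) -/(rate_pt popt x) /lag_fun.
change (opt_level (h x) s Pk l b) with (popt x); lra.
Qed.

Lemma lag_val_le_gap l' b' q : peak_admissible Pk q ->
  lag_val l' b' q <= lag_val l' b' popt + \int[P]_x gap_bound 1 (l' - l) (b' - b) x.
Proof.
move=> qa; rewrite -lerBlDl lag_valB //.
apply: (le_Rintegral_neq0 _ _ mh h0null).
- by apply: integrable_EFinB; apply: integrable_lag_fun => //; exact: opt_alloc_admissible.
- exact: integrable_gap_bound.
move=> x /gain_gt0 hp; case: qa => _ /(_ x) qx.
apply: (le_trans (lag_funB_le l' b' _ _ hp qx)).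
rewrite /gap_bound /gap_lin /gap_quad mul1r.
apply: concave_quad_le_min; first exact: curv_gt0.
by have := opt_alloc_itv x; case/andP: qx => ? ?; rewrite ler_norml; lra.
Qed.

Lemma lag_val_le_sub_sqr {q : T -> R} : peak_admissible Pk q ->
  lag_val l b q <= lag_val l b popt - \int[P]_x (curv x * (q x - popt x) ^+ 2).
Proof.
move=> qa; have iC := integrable_curv_sqr qa.
have i0 := finite_measure_integrable_cst P (0 : R) measurableT.
suff : lag_val l b q - lag_val l b popt
    <= \int[P]_x (0 - curv x * (q x - popt x) ^+ 2).
  by rewrite RintegralB // Rintegral_cst // mul0r sub0r; lra.
rewrite lag_valB //; apply: (le_Rintegral_neq0 _ _ mh h0null).
- by apply: integrable_EFinB; apply: integrable_lag_fun => //; exact: opt_alloc_admissible.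
- exact: integrable_EFinB.
move=> x /gain_gt0 hp; case: qa => _ /(_ x) qx; have := lag_funB_le l b _ _ hp qx.
by rewrite !subrr mul0r subrr mul0r addr0 mulNr sub0r.
Qed.

Lemma dual_fun_le l' b' : (dual_fun P h s Pa Pk Q l' b'
  <= (lag_val l' b' popt + \int[P]_x gap_bound 1 (l' - l) (b' - b) x)%:E)%E.
Proof.
apply: ge_ereal_sup => _ [q qa <-].
by rewrite lagrangianE // lee_fin lag_val_le_gap.
Qed.

Lemma dual_fun_opt : dual_fun P h s Pa Pk Q l b = (lag_val l b popt)%:E.
Proof.
have pa := opt_alloc_admissible.
apply/eqP; rewrite eq_le; apply/andP; split.
  have := dual_fun_le l b; rewrite !subrr.
  under eq_Rintegral do rewrite gap_bound00.
  by rewrite Rintegral_cst // mul0r addr0.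
by rewrite -lagrangianE //; apply: ereal_sup_ubound; exists popt.
Qed.

Lemma rateE {q : T -> R} : peak_admissible Pk q ->
  rate P h s q = (\int[P]_x rate_pt q x)%:E.
Proof. by move=> qa; exact: (Ex_Rintegral P (integrable_rate_pt qa)). Qed.

Lemma rate_le_lag_val {q : T -> R} : feasible P h Pa Pk Q q ->
  \int[P]_x rate_pt q x <= lag_val l b q.
Proof.
case=> qa [qE qH]; rewrite (Ex_Rintegral P (integrable_alloc qa)) lee_fin in qE.
rewrite (Ex_Rintegral P (integrable_hmul qa)) lee_fin in qH.
have e1 : 0 <= l * (\int[P]_x (h x * q x) - Q) by rewrite mulr_ge0 // subr_ge0.
have e2 : b * (\int[P]_x q x - Pa) <= 0 by rewrite mulr_ge0_le0 // subr_le0.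
by rewrite /lag_val; lra.
Qed.

Section DualOptimality.
Hypothesis dual_min : forall l' b' : R, 0 <= l' -> 0 <= b' ->
  (dual_fun P h s Pa Pk Q l b <= dual_fun P h s Pa Pk Q l' b')%E.

(* The derivative of the dual function at its minimizer [(l, b)] in a feasible
   direction [(u, v)] is nonnegative: stepping by [t] raises the upper bound
   [lag_val + gap] of [dual_fun_le] by [t] times the claimed quantity plus
   [t \int gap_bound t u v], and the latter integral vanishes as [t -> 0]. *)
Lemma dual_dir_deriv_ge0 (u v del : R) : 0 < del ->
  (forall t : R, 0 < t <= del -> 0 <= l + t * u /\ 0 <= b + t * v) ->
  0 <= u * (\int[P]_x (h x * popt x) - Q) - v * (\int[P]_x popt x - Pa).
Proof.
move=> del0 dirP; apply: (ge0_min_integral_vanish P del0 (measurable_gap_lin u v)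
  (measurable_gap_quad u v) (gap_lin_ge0 u v) (gap_quad_ge0 u v) (integrable_gap_lin u v)).
move=> t /[dup] /andP[t0 _] /dirP [lt0 bt0].
have := le_trans (dual_min _ _ lt0 bt0) (dual_fun_le _ _).
rewrite dual_fun_opt lee_fin.
have -> : l + t * u - l = t * u by ring.
have -> : b + t * v - b = t * v by ring.
under eq_Rintegral do rewrite gap_bound_scale //.
rewrite RintegralZl //; last exact/integrable_gap_bound/ltW.
set D := u * _ - v * _.
have -> : lag_val (l + t * u) (b + t * v) popt = lag_val l b popt + t * D.
  by rewrite /lag_val /D; ring.
move=> le_step; have : 0 <= t * (D + \int[P]_x gap_bound t u v x) by lra.
by rewrite pmulr_rge0.
Qed.

Lemma dual_optimal_slackness :
  [/\ 0 <= \int[P]_x (h x * popt x) - Q, \int[P]_x popt x - Pa <= 0,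
      l * (\int[P]_x (h x * popt x) - Q) = 0 & b * (\int[P]_x popt x - Pa) = 0].
Proof.
set A := _ - Q; set B := _ - Pa.
have hA : 0 <= A.
  have := @dual_dir_deriv_ge0 1 0 1 ltr01; rewrite mul1r mul0r subr0; apply.
  by move=> t /andP[t0 _]; rewrite mulr0 addr0 mulr1; split => //; rewrite addr_ge0 // ltW.
have hB : B <= 0.
  have := @dual_dir_deriv_ge0 0 1 1 ltr01; rewrite mul1r mul0r sub0r oppr_ge0; apply.
  by move=> t /andP[t0 _]; rewrite mulr0 addr0 mulr1; split => //; rewrite addr_ge0 // ltW.
split => //.
- have [->|lp] := eqVneq l 0; first by rewrite mul0r.
  have A0 : A <= 0.
    have := @dual_dir_deriv_ge0 (-1) 0 l; rewrite mul0r subr0 mulN1r oppr_ge0; apply.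
      by rewrite lt_neqAle eq_sym lp l0.
    by move=> t /andP[t0 tl]; rewrite mulr0 addr0; split => //; lra.
  by rewrite [A](_ : _ = 0) ?mulr0 //; apply/le_anti; rewrite A0 hA.
- have [->|bp] := eqVneq b 0; first by rewrite mul0r.
  have B0 : 0 <= B.
    have := @dual_dir_deriv_ge0 0 (-1) b; rewrite mul0r sub0r mulN1r opprK; apply.
      by rewrite lt_neqAle eq_sym bp b0.
    by move=> t /andP[t0 tb]; rewrite mulr0 addr0; split => //; lra.
  by rewrite [B](_ : _ = 0) ?mulr0 //; apply/le_anti; rewrite B0 hB.
Qed.

Lemma opt_alloc_feasible : feasible P h Pa Pk Q popt.
Proof.
have pa := opt_alloc_admissible; have [hA hB _ _] := dual_optimal_slackness.
split => //; split.
  by rewrite (Ex_Rintegral P (integrable_alloc pa)) lee_fin; lra.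
by rewrite (Ex_Rintegral P (integrable_hmul pa)) lee_fin; lra.
Qed.

Lemma lag_val_opt_alloc : lag_val l b popt = \int[P]_x rate_pt popt x.
Proof.
have [_ _ lA bB] := dual_optimal_slackness.
by rewrite /lag_val lA bB subr0 addr0.
Qed.

Lemma rate_le_opt_alloc {q : T -> R} : feasible P h Pa Pk Q q ->
  \int[P]_x rate_pt q x
  <= \int[P]_x rate_pt popt x - \int[P]_x (curv x * (q x - popt x) ^+ 2).
Proof.
move=> fq; have qa : peak_admissible Pk q by case: fq.
by rewrite -lag_val_opt_alloc (le_trans (rate_le_lag_val fq)) // lag_val_le_sub_sqr.
Qed.

Lemma opt_alloc_primal_optimal : primal_optimal P h s Pa Pk Q popt.
Proof.
split => [|q fq]; first exact: opt_alloc_feasible.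
have qa : peak_admissible Pk q by case: fq.
rewrite !rateE ?lee_fin //; last exact: opt_alloc_admissible.
have : 0 <= \int[P]_x (curv x * (q x - popt x) ^+ 2).
  by apply: Rintegral_ge0 => x _; exact: curv_sqr_ge0.
by have := rate_le_opt_alloc fq; lra.
Qed.

Lemma primal_optimal_ae_opt_alloc p : primal_optimal P h s Pa Pk Q p ->
  {ae P, forall x, p x = popt x}.
Proof.
case=> fp p_max; have pa : peak_admissible Pk p by case: fp.
have IC0 : \int[P]_x (curv x * (p x - popt x) ^+ 2) = 0.
  apply/le_anti; rewrite Rintegral_ge0 => [|x _]; last exact: curv_sqr_ge0.
  have := p_max _ opt_alloc_feasible.
  rewrite !rateE ?lee_fin //; last exact: opt_alloc_admissible.
  by have := rate_le_opt_alloc fp; lra.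
have := Rintegral_eq0_ae P _ (integrable_curv_sqr pa) (curv_sqr_ge0 p) IC0.
move=> C0ae; apply: filterS2 C0ae (ae_neq0 _ _ mh h0null) => x C0 /gain_gt0 hp.
by move: C0 => /eqP; rewrite mulf_eq0 (gt_eqF (curv_gt0 _ hp)) sqrf_eq0 subr_eq0 => /eqP.
Qed.

End DualOptimality.
End OptimalAllocation.

Theorem proposition4p3 (R : realType) (d : measure_display)
  (T : measurableType d) (P : probability T R) (h : T -> R)
  (sigma2 Pavg Ppeak Qbar lam beta : R) :
  measurable_fun setT h -> (forall nu, 0 <= h nu) ->
  P.-integrable setT (fun nu => (h nu)%:E) ->
  has_continuous_pdf P h ->
  0 < sigma2 -> 0 < Pavg -> Pavg <= Ppeak -> 0 <= Qbar ->
  (exists p, feasible P h Pavg Ppeak Qbar p) ->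
  dual_optimal P h sigma2 Pavg Ppeak Qbar lam beta ->
  primal_optimal P h sigma2 Pavg Ppeak Qbar (opt_alloc h sigma2 Ppeak lam beta)
  /\ (forall p, primal_optimal P h sigma2 Pavg Ppeak Qbar p ->
        {ae P, forall nu, p nu = opt_alloc h sigma2 Ppeak lam beta nu}).
Proof.
move=> mh h0 ih hpdf s0 Pa0 PaPk _ _ [l0 [b0 dual_min]].
have Pk0 : 0 <= Ppeak by rewrite (le_trans (ltW Pa0)).
have h0null := pdf_preimage_set1 0 hpdf.
split; first exact: opt_alloc_primal_optimal.
exact: primal_optimal_ae_opt_alloc.
Qed.
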